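(* Let $\Phi:\mathcal H\to\mathrm{End}_{\mathbb K}(V^{\otimes n})$ be the representation with $\Phi(g_a)=T_a$ ($0\le a\le n-1$) and let $\Psi^{\otimes n}:U_q(\mathfrak g)\to\mathrm{End}_{\mathbb K}(V^{\otimes n})$ be the tensor-power vector representation, both as in the context. Then for all $X\in\mathcal H$ and $Y\in U_q(\mathfrak g)$, $$\Phi(X)\Psi^{\otimes n}(Y)=\Psi^{\otimes n}(Y)\Phi(X).$$
   Context: Let $m,n\ge 1$, $\mathbb K=\mathbb C(q,Q_1,\dots,Q_m)$ (indeterminates). Cyclotomic Hecke algebra $\mathcal H$: the unital $\mathbb K$-algebra generated by $g_0,\dots,g_{n-1}$ with relations $(g_0-Q_1)\cdots(g_0-Q_m)=0$, $g_0g_1g_0g_1=g_1g_0g_1g_0$, $g_i^2=(q-q^{-1})g_i+1$ ($1\le i\le n-1$), $g_ig_j=g_jg_i$ ($|i-j|\ge2$), $g_ig_{i+1}g_i=g_{i+1}g_ig_{i+1}$ ($1\le i\le n-2$). Superspace and Hecke action: fix nonnegative integers $k_1,\dots,k_m,\ell_1,\dots,\ell_m$, $N=\sum_c(k_c+\ell_c)>0$, $d_c=\sum_{j\le c}(k_j+\ell_j)$. $V$ is a $\mathbb K$-superspace with homogeneous basis $\{v^{(c)}_a:1\le c\le m,1\le a\le k_c+\ell_c\}$, $v^{(c)}_a$ even iff $a\le k_c$, of colour $c$; ordered by $v^{(c)}_a<v^{(c')}_b$ iff $c<c'$ or ($c=c'$, $a<b$), and written $u_1<\cdots<u_N$ (so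 colour $c$ occupies positions $d_{c-1}+1,\dots,d_c$, $d_0=0$). $\bar j$ is the parity of $u_j$, $\mathrm{col}(j)$ its colour. For $\mathbf i=(i_1,\dots,i_n)\in\{1,\dots,N\}^n$, $\mathbf i$ also denotes $u_{i_1}\otimes\cdots\otimes u_{i_n}$, $c_t(\mathbf i)=\mathrm{col}(i_t)$, and $\mathbf i s_a$ is $\mathbf i$ with entries $a,a+1$ swapped. Operators: $s_a(\mathbf i)=(-1)^{\bar i_a}\mathbf i$ if $i_a=i_{a+1}$, else $(-1)^{\bar i_a\bar i_{a+1}}\mathbf i s_a$; $T_a(\mathbf i)=(q-q^{-1})\mathbf i+(-1)^{\bar i_a\bar i_{a+1}}\mathbf i s_a$ if $i_a<i_{a+1}$, $=\frac{(q-q^{-1})+(-1)^{\bar i_a}(q+q^{-1})}{2}\mathbf i$ if $i_a=i_{a+1}$, $=(-1)^{\bar i_a\bar i_{a+1}}\mathbf i s_a$ if $i_a>i_{a+1}$; $S_a(\mathbf i)=T_a(\mathbf i)$ if $c_a(\mathbf i)=c_{a+1}(\mathbf i)$, else $s_a(\mathbf i)$; $S_0(\mathbf i)=Q_{c_1(\mathbf i)}\mathbf i$; $\theta=S_{n-1}\cdots S_1$; $T_0=T_1^{-1}\cdots T_{n-1}^{-1}\theta S_0$. The assignment $g_a\mapsto T_a$ extends to a representation $\Phi$ of $\mathcal H$. Quantum superalgebra action: $\mathfrak g=\mathfrak{gl}(k_1|\ell_1)\oplus\cdots\oplus\mathfrak{gl}(k_m|\ell_m)\subseteq\mathfrak{gl}(k|\ell)$,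 $k=\sum k_c$, $\ell=\sum\ell_c$, and $U_q(\mathfrak g)$ is its quantized enveloping superalgebra, viewed as the subalgebra of the quantum general linear superalgebra (with respect to the ordered homogeneous basis $u_1,\dots,u_N$) generated by $K_b^{\pm1}$ ($1\le b\le N$) and $E_a,F_a$ for $a\in\{1,\dots,N-1\}\setminus\{d_1,\dots,d_{m-1}\}$; $E_a,F_a$ have parity $\bar a+\overline{a+1}$, $K_b$ are even. Vector representation $\Psi$ on $V$: $E_au_{a+1}=(-1)^{\overline{a+1}}u_a$, $E_au_j=0$ ($j\ne a+1$); $F_au_a=(-1)^{\bar a}u_{a+1}$, $F_au_j=0$ ($j\neq a$); $K_b^{\pm1}u_j=q^{\pm(-1)^{\bar j}\delta_{bj}}u_j$. With $\widetilde K_a=K_aK_{a+1}^{-1}$, the representation $\Psi^{\otimes n}$ on $V^{\otimes n}$ (from the coproduct $\Delta(K_b)=K_b\otimes K_b$, $\Delta(E_a)=E_a\otimes\widetilde K_a+1\otimes E_a$, $\Delta(F_a)=F_a\otimes1+\widetilde K_a^{-1}\otimes F_a$) is given by $\Psi^{\otimes n}(E_a)=\sum_{p=0}^{n-1}\widetilde K_a^{\otimes p}\otimes\Psi(E_a)\otimes\mathrm{Id}^{\otimes(n-1-p)}$, $\Psi^{\otimes n}(F_a)=\sum_{p=0}^{n-1}\mathrm{Id}^{\otimes p}\otimes\Psi(F_a)\otimes(\widetilde K_a^{-1})^{\otimes(n-1-p)}$, $\Psi^{\otimes n}(K_b)=K_b^{\otimes n}$, where tensor products of homogeneous operators act with the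 Koszul sign $(\phi\otimes\psi)(x\otimes y)=(-1)^{\bar x\bar\psi}\phi(x)\otimes\psi(y)$. *)

From HB Require Import structures.
From mathcomp Require Import all_boot all_algebra.
From mathcomp Require Import Rstruct complex fraction.
From mathcomp Require Import mpoly.

Set Implicit Arguments.
Unset Strict Implicit.
Unset Printing Implicit Defensive.
Import GRing.Theory.
Local Open Scope ring_scope.

Definition Cfield : idomainType := (Rdefinitions.R)[i].

(* K = C(q, Q_1, ..., Q_m): the field of fractions of C[X_0, ..., X_m],
   with q = X_0 and Q_c = X_c (1 <= c <= m). *)
Definition Kf (m : nat) : fieldType := {fraction {mpoly Cfield[m.+1]}}.
Definition qv (m : nat) : Kf m := FracField.tofrac ('X_(@ord0 m) : {mpoly Cfield[m.+1]}).
Definition Qv (m : nat) (c : nat) : Kf m :=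
  FracField.tofrac ('X_(@inord m c) : {mpoly Cfield[m.+1]}).

Inductive gen_alg (K : fieldType) (d : nat) (S : 'M[K]_d -> Prop)
  : 'M[K]_d -> Prop :=
  | ga_gen M : S M -> gen_alg S M
  | ga_one : gen_alg S 1%:M
  | ga_add A B : gen_alg S A -> gen_alg S B -> gen_alg S (A + B)
  | ga_scale (c : K) A : gen_alg S A -> gen_alg S (c *: A)
  | ga_mul A B : gen_alg S A -> gen_alg S B -> gen_alg S (A *m B).

Section Setup.
(* Colours are numbered 1..m; k c, l c for 1 <= c <= m (other values unused).
   Basis positions u_1 < ... < u_N are numbered 1..N (paper convention);
   tensor positions are numbered 1..n. *)
Variables (m n : nat) (k l : nat -> nat).

Local Notation K := (Kf m).
Local Notation q := (qv m).

Definition dd (c : nat) : nat := (\sum_(1 <= j < c.+1) (k j + l j))%N.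
Definition NN : nat := dd m.

(* colour of basis position j (1 <= j <= N): the c with d_{c-1} < j <= d_c *)
Definition colr (j : nat) : nat :=
  (\sum_(1 <= c < m) nat_of_bool (dd c < j)%N).+1.
(* parity of u_j (true = odd): u_j = v^{(c)}_a with a = j - d_{c-1},
   even iff a <= k_c *)
Definition par (j : nat) : bool :=
  ~~ (j - dd (colr j).-1 <= k (colr j))%N.

Definition sgn (b : bool) : K := (-1) ^+ b.

(* basis of V^{\otimes n}: i = (i_1,..,i_n), stored 0-based as ordinals *)
Definition Tn := {ffun 'I_n -> 'I_NN}.

(* i_p, as a number in 1..N, for tensor position p in 1..n *)
Definition ent (x : Tn) (p : nat) : nat :=
  (nth 0%N [seq val (x t) | t <- enum 'I_n] p.-1).+1.

(* x s_a : entries at positions a, a+1 swapped (1 <= a <= n-1) *)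
Definition swp (x : Tn) (a : nat) : Tn :=
  [ffun t : 'I_n => x (insubd t (if val t == a.-1 then a
                                else if val t == a then a.-1 else val t))].

(* x with the entry at position p replaced by u_v (1 <= v <= N) *)
Definition repl (x : Tn) (p v : nat) : Tn :=
  [ffun t : 'I_n => if val t == p.-1 then insubd (x t) v.-1 else x t].

Definition dl (x y : Tn) : K := (x == y)%:R.

(* A coefficient function f : Tn -> Tn -> K (f x y = coefficient of y in the
   image of x) and its matrix (column s = image of the s-th basis vector). *)
Definition mat (f : Tn -> Tn -> K) : 'M[K]_#|Tn| :=
  \matrix_(r, s) f (enum_val s) (enum_val r).

Definition Tc (a : nat) (x y : Tn) : K :=
  let ia := ent x a in let ib := ent x a.+1 in
  if (ia < ib)%N then (q - q^-1) * dl x y + sgn (par ia && par ib) * dl (swp x a) y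
  else if ia == ib then ((q - q^-1) + sgn (par ia) * (q + q^-1)) / 2%:R * dl x y
  else sgn (par ia && par ib) * dl (swp x a) y.

Definition sc (a : nat) (x y : Tn) : K :=
  let ia := ent x a in let ib := ent x a.+1 in
  if ia == ib then sgn (par ia) * dl x y
  else sgn (par ia && par ib) * dl (swp x a) y.

Definition Sc (a : nat) (x y : Tn) : K :=
  if colr (ent x a) == colr (ent x a.+1) then Tc a x y else sc a x y.

Definition S0c (x y : Tn) : K := Qv m (colr (ent x 1)) * dl x y.

Definition Tmat (a : nat) : 'M[K]_#|Tn| := mat (Tc a).

(* theta = S_{n-1} ... S_1 *)
Definition theta : 'M[K]_#|Tn| :=
  foldr (fun a M => mat (Sc a) *m M) 1%:M (rev (iota 1 n.-1)).

(* T_0 = T_1^{-1} ... T_{n-1}^{-1} theta S_0 *)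
Definition T0mat : 'M[K]_#|Tn| :=
  foldr (fun a M => invmx (Tmat a) *m M) (theta *m mat S0c) (iota 1 n.-1).

(* Phi(g_0) = T_0, Phi(g_a) = T_a (1 <= a <= n-1) *)
Definition PhiGen (M : 'M[K]_#|Tn|) : Prop :=
  M = T0mat \/ exists a, [/\ (1 <= a)%N, (a <= n.-1)%N & M = Tmat a].

(* eigenvalue of K_b on u_j *)
Definition kb (b j : nat) : K :=
  if j == b then (if par j then q^-1 else q) else 1.
(* eigenvalue of \tilde K_a = K_a K_{a+1}^{-1} on u_j *)
Definition kt (a j : nat) : K := kb a j * (kb a.+1 j)^-1.

(* parity of E_a, F_a *)
Definition parEF (a : nat) : bool := par a (+) par a.+1.

Definition oddbefore (x : Tn) (p : nat) : bool :=
  odd (\sum_(r < p) nat_of_bool (par (ent x r.+1))).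

(* Psi^{(x)n}(E_a) = sum_{p=1}^n Kt^{(x)(p-1)} (x) E_a (x) Id^{(x)(n-p)} *)
Definition Ec (a : nat) (x y : Tn) : K :=
  \sum_(p < n)
    (if ent x p.+1 == a.+1 then
       (\prod_(r < p) kt a (ent x r.+1)) * sgn (parEF a && oddbefore x p)
       * sgn (par a.+1) * dl (repl x p.+1 a) y
     else 0).

(* Psi^{(x)n}(F_a) = sum_{p=1}^n Id^{(x)(p-1)} (x) F_a (x) (Kt^{-1})^{(x)(n-p)} *)
Definition Fc (a : nat) (x y : Tn) : K :=
  \sum_(p < n)
    (if ent x p.+1 == a then
       sgn (parEF a && oddbefore x p) * sgn (par a)
       * (\prod_(r < n | (p < r)%N) (kt a (ent x r.+1))^-1)
       * dl (repl x p.+1 a.+1) y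
     else 0).

Definition Kc (b : nat) (x y : Tn) : K :=
  (\prod_(p < n) kb b (ent x p.+1)) * dl x y.
Definition Kic (b : nat) (x y : Tn) : K :=
  (\prod_(p < n) (kb b (ent x p.+1))^-1) * dl x y.

(* generators of U_q(g): K_b^{+-1} (1 <= b <= N), E_a, F_a for
   a in {1..N-1} \ {d_1, ..., d_{m-1}} *)
Definition PsiGen (M : 'M[K]_#|Tn|) : Prop :=
  (exists b, [/\ (1 <= b)%N, (b <= NN)%N & (M = mat (Kc b) \/ M = mat (Kic b))])
  \/ (exists a, [/\ (1 <= a)%N, (a < NN)%N, a \notin [seq dd c | c <- iota 1 m.-1]
                 & (M = mat (Ec a) \/ M = mat (Fc a))]).

End Setup.

Arguments PhiGen m n k l M : clear implicits.
Arguments PsiGen m n k l M : clear implicits.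

From Pilot Require Import Defs.
From HB Require Import structures.
From mathcomp Require Import all_boot all_algebra.
From mathcomp Require Import Rstruct complex fraction.
From mathcomp Require Import mpoly.
From mathcomp Require Import perm ring zify.

Set Implicit Arguments.
Unset Strict Implicit.
Unset Printing Implicit Defensive.
Import GRing.Theory.
Local Open Scope ring_scope.

(* It suffices that every generator of one side commutes with every generator of
   the other.
   The K_b act diagonally by a weight symmetric in the tensor factors, and S_0
   multiplies by Q_c for the colour c of the first factor, which E_a and F_a
   preserve since a is not a colour boundary.  T_a and S_a act on factors a, a+1
   only, as al(i_a, i_a+1) + be(i_a, i_a+1) s_a, while E_b and F_b are sums over
   positions p of a single-site operator with diagonal factors to the left and
   right of p.  The terms with p outside {a, a+1} commute with the local operator
   termwise, and the remaining two terms reduce to commutation on V (x) V, a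
   finite check on the order, colours and parities of two indices.  T_0 is a
   product of the T_a^-1, the S_a and S_0. *)

Section Commutant.
Variables (R : comUnitRingType) (d : nat) (S : 'M[R]_d -> Prop).

Definition commutes_with (X : 'M[R]_d) := forall Y, S Y -> X *m Y = Y *m X.

Lemma commutes_with1 : commutes_with 1%:M.
Proof. by move=> Y _; rewrite mul1mx mulmx1. Qed.

Lemma commutes_withM X1 X2 :
  commutes_with X1 -> commutes_with X2 -> commutes_with (X1 *m X2).
Proof. by move=> h1 h2 Y SY; rewrite -mulmxA h2 // !mulmxA h1. Qed.

Lemma commutes_withV X : commutes_with X -> commutes_with (invmx X).
Proof.
move=> hX Y /hX XY; have [uX|/invmx_out -> //] := boolP (X \in unitmx).
by rewrite -[LHS]mulmx1 -(mulmxV uX) mulmxA -(mulmxA _ Y) -XY !mulmxA mulVmx // mul1mx.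
Qed.

Lemma commutes_with_foldr (F : nat -> 'M[R]_d) B s :
  (forall a, a \in s -> commutes_with (F a)) -> commutes_with B ->
  commutes_with (foldr (fun a M => F a *m M) B s).
Proof.
elim: s => [|a s IH] //= hF hB; apply: commutes_withM; first exact/hF/mem_head.
by apply: IH => // b bs; apply/hF; rewrite inE bs orbT.
Qed.

End Commutant.

Lemma gen_alg_comm_l (F : fieldType) d (S : 'M[F]_d -> Prop) (Y : 'M[F]_d) X :
  (forall X, S X -> X *m Y = Y *m X) -> gen_alg S X -> X *m Y = Y *m X.
Proof.
move=> hS; elim => {X} [M /hS //| | A B _ hA _ hB | c A _ hA | A B _ hA _ hB].
- by rewrite mul1mx mulmx1.
- by rewrite mulmxDl mulmxDr hA hB.
- by rewrite -scalemxAl -scalemxAr hA.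
- by rewrite -mulmxA hB !mulmxA hA.
Qed.

Lemma gen_alg_comm (F : fieldType) d (S T : 'M[F]_d -> Prop) X Y :
  (forall X Y, S X -> T Y -> X *m Y = Y *m X) ->
  gen_alg S X -> gen_alg T Y -> X *m Y = Y *m X.
Proof.
move=> hST gX gY; apply: (gen_alg_comm_l _ gX) => X' SX'.
by apply/esym/(gen_alg_comm_l _ gY) => Y' TY'; apply/esym/hST.
Qed.

Lemma sum_eq_off2 (V : nmodType) (I : finType) (F G : I -> V) i0 i1 :
  i0 != i1 -> (forall i, i != i0 -> i != i1 -> F i = G i) ->
  F i0 + F i1 = G i0 + G i1 -> \sum_i F i = \sum_i G i.
Proof.
move=> i01 FG FG01; have i10 : i1 != i0 by rewrite eq_sym.
rewrite (bigD1 i0) // (bigD1 i1) //= [RHS](bigD1 i0) // [in RHS](bigD1 i1) //=.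
by rewrite !addrA FG01; congr (_ + _); apply: eq_bigr => i /andP[? ?]; apply: FG.
Qed.

Section TwoSite.
Variables (F : fieldType) (q : F) (par : nat -> bool) (colr : nat -> nat).
Hypotheses (q_neq0 : q != 0) (two_neq0 : 2%:R != 0 :> F).

Definition sg (c : bool) : F := (-1) ^+ c.

Lemma sg_odd_sum c (I : Type) (r : seq I) (P : pred I) (a : I -> nat) :
  sg (c && odd (\sum_(i <- r | P i) a i)) = \prod_(i <- r | P i) sg (c && odd (a i)).
Proof.
apply: (big_morph (fun s => sg (c && odd s))); last by rewrite /sg andbF.
by move=> s t; rewrite /sg oddD; case: c; case: (odd s); case: (odd t);
  rewrite /= ?expr0 ?expr1 ?mulr1 ?mul1r ?mulrNN ?mulr1.
Qed.

Definition Keig (b j : nat) : F := if j == b then (if par j then q^-1 else q) else 1.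
Definition Kteig (b j : nat) : F := Keig b j * (Keig b.+1 j)^-1.

(* An operator A on V (x) V is given by the images of the basis vectors u_i (x) u_j:
   A i j D is that image, evaluated by the linear form u_u (x) u_v |-> D u v. *)
Definition op2 := nat -> nat -> (nat -> nat -> F) -> F.

Definition op2_comm (A B : op2) :=
  forall i j D, A i j (fun u v => B u v D) = B i j (fun u v => A u v D).

Definition op2_local (al be : nat -> nat -> F) : op2 :=
  fun i j D => al i j * D i j + be i j * D j i.

(* The coproduct image of an operator sending u_src to u_tgt, which picks up the
   factor lam v when it passes a left factor u_v and rho v at a right factor u_v. *)
Definition op2_site (src tgt : nat) (lam rho : nat -> F) : op2 := fun i j D =>
  (i == src)%:R * rho j * D tgt j + (j == src)%:R * lam i * D i tgt.

Definition sgEF b v := sg ((par b (+) par b.+1) && par v).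

Definition op2_E b : op2 := op2_site b.+1 b (fun v => Kteig b v * sgEF b v) (fun=> 1).
Definition op2_F b : op2 := op2_site b b.+1 (sgEF b) (fun v => (Kteig b v)^-1).

Definition T_id (i j : nat) : F :=
  if (i < j)%N then q - q^-1
  else if i == j then ((q - q^-1) + sg (par i) * (q + q^-1)) / 2%:R else 0.
Definition T_sw (i j : nat) : F := if i == j then 0 else sg (par i && par j).
(* S_a is op2_local S_id T_sw: on indices of different colours, which are distinct,
   T_sw already is the coefficient of s_a. *)
Definition S_id (i j : nat) : F := if colr i == colr j then T_id i j else 0.

Lemma op2_comm_site_off src tgt lam rho al be i j D : i != src -> j != src ->
  op2_site src tgt lam rho i j (fun u v => op2_local al be u v D) =
  op2_local al be i j (fun u v => op2_site src tgt lam rho u v D).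
Proof.
by move=> /negbTE i_src /negbTE j_src; rewrite /op2_site /op2_local /= i_src j_src /=; ring.
Qed.

Local Ltac decide_nat :=
  repeat match goal with
  | |- context [ (?u < ?v)%N ] =>
      first [ have -> : (u < v)%N = true by (apply/idP; lia)
            | have -> : (u < v)%N = false by (apply/negbTE/negP => ?; lia) ]
  | |- context [ @eq_op _ ?u ?v ] =>
      first [ have -> : (u == v) = true by (apply/eqP; lia)
            | have -> : (u == v) = false by (apply/negbTE/eqP => ?; lia) ]
  end.

Local Ltac case_parities :=
  repeat match goal with |- context [par ?u] => case: (par u) end.

Local Ltac solve_two_site :=
  rewrite /op2_E /op2_F /op2_site /op2_local /T_id /T_sw /sgEF /Kteig /Keig /=;
  decide_nat; case_parities; rewrite /sg /=; field; rewrite ?q_neq0 ?two_neq0 ?oner_neq0.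

Lemma op2_comm_E_T b : op2_comm (op2_E b) (op2_local T_id T_sw).
Proof.
move=> i j D.
have [-> | ni] := eqVneq i b.+1.
  have [-> | nj] := eqVneq j b.+1; first by solve_two_site.
  by case: (ltngtP j b) => [hj|hj|->]; solve_two_site.
have [-> | nj] := eqVneq j b.+1.
  by case: (ltngtP i b) => [hi|hi|->]; solve_two_site.
exact: op2_comm_site_off ni nj.
Qed.

Lemma op2_comm_F_T b : op2_comm (op2_F b) (op2_local T_id T_sw).
Proof.
move=> i j D.
have [-> | ni] := eqVneq i b.
  have [-> | nj] := eqVneq j b; first by solve_two_site.
  by case: (ltngtP j b.+1) => [hj|hj|->]; solve_two_site.
have [-> | nj] := eqVneq j b.
  by case: (ltngtP i b.+1) => [hi|hi|->]; solve_two_site.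
exact: op2_comm_site_off ni nj.
Qed.

Section SameColour.
Variable b : nat.
Hypothesis colr_b : colr b.+1 = colr b.

Lemma op2_comm_E_S : op2_comm (op2_E b) (op2_local S_id T_sw).
Proof.
move=> i j D.
have [-> | ni] := eqVneq i b.+1.
  have [hj | hj] := eqVneq (colr j) (colr b).
    have := op2_comm_E_T b b.+1 j D.
    by rewrite /op2_E /op2_site /op2_local /S_id colr_b hj !eqxx.
  have [jb jb1] : j != b /\ j != b.+1 by split; apply: contra_neq hj => ->.
  rewrite /op2_E /op2_site /op2_local /S_id /= colr_b eqxx eq_sym (negbTE hj).
  by solve_two_site.
have [-> | nj] := eqVneq j b.+1.
  have [hi | hi] := eqVneq (colr i) (colr b).
    have := op2_comm_E_T b i b.+1 D.
    by rewrite /op2_E /op2_site /op2_local /S_id colr_b hi (negbTE ni) !eqxx.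
  have [ib ib1] : i != b /\ i != b.+1 by split; apply: contra_neq hi => ->.
  rewrite /op2_E /op2_site /op2_local /S_id /= colr_b eqxx (negbTE hi).
  by solve_two_site.
exact: op2_comm_site_off ni nj.
Qed.

Lemma op2_comm_F_S : op2_comm (op2_F b) (op2_local S_id T_sw).
Proof.
move=> i j D.
have [-> | ni] := eqVneq i b.
  have [hj | hj] := eqVneq (colr j) (colr b).
    have := op2_comm_F_T b b j D.
    by rewrite /op2_F /op2_site /op2_local /S_id colr_b hj !eqxx.
  have [jb jb1] : j != b /\ j != b.+1 by split; apply: contra_neq hj => ->.
  rewrite /op2_F /op2_site /op2_local /S_id /= colr_b eqxx eq_sym (negbTE hj).
  by solve_two_site.
have [-> | nj] := eqVneq j b.
  have [hi | hi] := eqVneq (colr i) (colr b).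
    have := op2_comm_F_T b i b D.
    by rewrite /op2_F /op2_site /op2_local /S_id colr_b hi (negbTE ni) !eqxx.
  have [ib ib1] : i != b /\ i != b.+1 by split; apply: contra_neq hi => ->.
  rewrite /op2_F /op2_site /op2_local /S_id /= colr_b eqxx (negbTE hi).
  by solve_two_site.
exact: op2_comm_site_off ni nj.
Qed.

End SameColour.
End TwoSite.

Arguments sg {F} c.
Arguments sgEF {F} par b v.
Arguments T_sw {F} par i j.

Section TensorPower.
Variables (m n : nat) (k l : nat -> nat).
Local Notation K := (Kf m).
Local Notation T := (Tn m n k l).
Local Notation N := (NN m k l).
Local Notation q := (qv m).
Local Notation par := (par m k l).
Local Notation colr := (colr m k l).
Implicit Types (x y z : T) (f g : T -> T -> K).

Definition coef_mul f g x z := \sum_y f x y * g y z.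

(* [mat] stores coefficient arrays transposed, hence the reversed order. *)
Lemma mat_mul f g : mat f *m mat g = mat (coef_mul g f).
Proof.
apply/matrixP => r s; rewrite /mat !mxE /coef_mul.
transitivity (\sum_(y in T) g (enum_val s) y * f y (enum_val r)).
  by rewrite [RHS]big_enum_val; apply: eq_bigr => t _; rewrite !mxE mulrC.
by apply: eq_bigl => y; rewrite inE.
Qed.

Lemma mat_comm f g : coef_mul f g =2 coef_mul g f -> mat f *m mat g = mat g *m mat f.
Proof. by move=> fg; rewrite !mat_mul; apply/matrixP => r s; rewrite !mxE fg. Qed.

Lemma eq_mat f g : f =2 g -> mat f = mat g.
Proof. by move=> fg; apply/matrixP => r s; rewrite !mxE fg. Qed.

Lemma sum_dl_mul w (G : T -> K) : \sum_y dl w y * G y = G w.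
Proof.
rewrite (bigD1 w) //= /dl eqxx mul1r big1 ?addr0 // => y yw.
by rewrite eq_sym (negbTE yw) mul0r.
Qed.

Definition diag (d : T -> K) x y := d x * dl x y.

Lemma coef_mul_diagl d g x z : coef_mul (diag d) g x z = d x * g x z.
Proof.
rewrite /coef_mul /diag.
by under eq_bigr do rewrite -mulrA; rewrite -mulr_sumr sum_dl_mul.
Qed.

Lemma diag_comm d d' : coef_mul (diag d) (diag d') =2 coef_mul (diag d') (diag d).
Proof. by move=> x z; rewrite !coef_mul_diagl /diag; ring. Qed.

Definition entry x (t : 'I_n) : nat := (x t).+1.

Lemma entE x (t : 'I_n) : ent x t.+1 = entry x t.
Proof. by rewrite /ent /= (nth_map t) ?size_enum_ord // nth_ord_enum. Qed.

Definition basis_index (v : nat) := (0 < v <= N)%N.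

Lemma basis_index_entry x t : basis_index (entry x t).
Proof. exact: ltn_ord. Qed.

Lemma entry_inj x y : entry x =1 entry y -> x = y.
Proof. by move=> xy; apply/ffunP => t; apply/val_inj; case: (xy t). Qed.

Lemma entry_repl x (p : 'I_n) v t : basis_index v ->
  entry (repl x p.+1 v) t = if t == p then v else entry x t.
Proof.
case: v => [//|v] /andP[_ vN]; rewrite /entry /repl ffunE.
have -> : (val t == p.+1.-1) = (t == p) by [].
by case: (t == p); rewrite // val_insubd vN.
Qed.

Lemma entry_repl_ne x (p t : 'I_n) v : basis_index v -> t != p ->
  entry (repl x p.+1 v) t = entry x t.
Proof. by move=> v_ok tp; rewrite entry_repl // (negbTE tp). Qed.

(* The n-fold coproduct of a single-site operator u_src |-> c0 u_tgt, which picks up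
   lam v at every factor u_v to its left and rho v at every one to its right. *)
Definition site_coef (lam rho : nat -> K) (c0 : K) x (p : 'I_n) : K :=
  c0 * \prod_(r < n | (r < p)%N) lam (entry x r) * \prod_(r < n | (p < r)%N) rho (entry x r).

Definition site_op src tgt lam rho c0 x y : K :=
  \sum_(p < n) (entry x p == src)%:R * site_coef lam rho c0 x p * dl (repl x p.+1 tgt) y.

Lemma coef_mul_site_opl src tgt lam rho c0 g x z :
  coef_mul (site_op src tgt lam rho c0) g x z =
  \sum_p (entry x p == src)%:R * site_coef lam rho c0 x p * g (repl x p.+1 tgt) z.
Proof.
rewrite /coef_mul; under eq_bigr do rewrite /site_op mulr_suml.
rewrite exchange_big; apply: eq_bigr => p _.
by under eq_bigr do rewrite -mulrA; rewrite -mulr_sumr sum_dl_mul.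
Qed.

Lemma site_op_diag_comm d src tgt lam rho c0 :
  (forall y p, entry y p = src -> d (repl y p.+1 tgt) = d y) ->
  coef_mul (site_op src tgt lam rho c0) (diag d) =2
  coef_mul (diag d) (site_op src tgt lam rho c0).
Proof.
move=> dP x z; rewrite coef_mul_site_opl coef_mul_diagl /site_op mulr_sumr.
apply: eq_bigr => p _; rewrite /diag.
by have [/dP ->|_] := eqVneq (entry x p) src; rewrite /=; ring.
Qed.

Lemma big_ent_prefix (R : Type) (idx : R) (op : Monoid.law idx) (G : nat -> R) x
    (p : 'I_n) :
  \big[op/idx]_(r < p) G (ent x r.+1) = \big[op/idx]_(r < n | (r < p)%N) G (entry x r).
Proof.
rewrite (big_ord_widen n (fun r => G (ent x r.+1)) (ltnW (ltn_ord p))).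
by apply: eq_bigr => r _; rewrite entE.
Qed.

Lemma EcE b : Ec b =2
  site_op b.+1 b (fun v => Kteig q par b v * sgEF par b v) (fun=> 1) (sg (par b.+1)).
Proof.
move=> x y; apply: eq_bigr => p _; rewrite entE /site_coef.
case: (entry x p == b.+1); rewrite /=; last by rewrite !mul0r.
rewrite (@big_ent_prefix _ _ _ (kt m k l b)) /oddbefore.
rewrite (@big_ent_prefix _ _ _ (fun v => nat_of_bool (par v))).
change (sgn m) with (@sg K); rewrite sg_odd_sum.
rewrite mul1r big1_eq mulr1 [in RHS]big_split /= [sg _ * _]mulrC.
by under [X in _ * X * _ * _ = _]eq_bigr do rewrite oddb.
Qed.

Lemma FcE b : Fc b =2
  site_op b b.+1 (sgEF par b) (fun v => (Kteig q par b v)^-1) (sg (par b)).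
Proof.
move=> x y; apply: eq_bigr => p _; rewrite entE /site_coef.
case: (entry x p == b); rewrite /=; last by rewrite !mul0r.
rewrite /oddbefore (@big_ent_prefix _ _ _ (fun v => nat_of_bool (par v))).
change (sgn m) with (@sg K); rewrite sg_odd_sum mul1r [_ * sg _]mulrC.
under eq_bigr do rewrite oddb.
by under [X in _ * X * _ = _]eq_bigr do rewrite entE.
Qed.

Section AdjacentPositions.
Variables (P : nat) (ltP : (P.+1 < n)%N).
Let i0 : 'I_n := Ordinal (ltnW ltP).
Let i1 : 'I_n := Ordinal ltP.

Lemma i0_neq_i1 : i0 != i1.
Proof. by rewrite -val_eqE /= ltn_eqF. Qed.

Lemma i0_eq_i1F : (i0 == i1) = false. Proof. exact: negbTE i0_neq_i1. Qed.
Lemma i1_eq_i0F : (i1 == i0) = false. Proof. by rewrite eq_sym i0_eq_i1F. Qed.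

Lemma entry_swp x t : entry (swp x P.+1) t = entry x (tperm i0 i1 t).
Proof.
rewrite /entry /swp ffunE; congr (x _).+1; apply/val_inj; rewrite val_insubd /=.
case: tpermP => [->|->|/eqP t0 /eqP t1] /=; first by rewrite eqxx ltP.
  by rewrite gtn_eqF // eqxx ltnW.
rewrite -!val_eqE /= in t0 t1.
by rewrite (negbTE t0) (negbTE t1) ltn_ord.
Qed.

Lemma lt_tperm (p : nat) t : p != P.+1 -> (tperm i0 i1 t < p)%N = (t < p)%N.
Proof. by move=> pP; case: tpermP => [->|->|_ _] //=; apply/idP/idP => ?; lia. Qed.

Lemma gt_tperm (p : nat) t : p != P -> (p < tperm i0 i1 t)%N = (p < t)%N.
Proof. by move=> pP; case: tpermP => [->|->|_ _] //=; apply/idP/idP => ?; lia. Qed.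

Lemma prod_swp (A : pred 'I_n) (G : nat -> K) x :
  (forall t, A (tperm i0 i1 t) = A t) ->
  \prod_(t | A t) G (entry (swp x P.+1) t) = \prod_(t | A t) G (entry x t).
Proof.
move=> A_tperm; rewrite (reindex_inj (@perm_inj _ (tperm i0 i1))).
by apply: eq_big => [t|t _]; rewrite ?A_tperm // entry_swp tpermK.
Qed.

Lemma prod_lt_succ (G : 'I_n -> K) :
  \prod_(r < n | (r < i1)%N) G r = \prod_(r < n | (r < i0)%N) G r * G i0.
Proof.
rewrite (bigD1 i0) //= mulrC; congr (_ * _); apply: eq_bigl => r.
by rewrite -val_eqE /=; apply/idP/idP => [/andP[] | ?]; [lia | apply/andP; split; lia].
Qed.

Lemma prod_gt_pred (G : 'I_n -> K) :
  \prod_(r < n | (i0 < r)%N) G r = \prod_(r < n | (i1 < r)%N) G r * G i1.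
Proof.
rewrite (bigD1 i1) //= mulrC; congr (_ * _); apply: eq_bigl => r.
by rewrite -val_eqE /=; apply/idP/idP => [/andP[] | ?]; [lia | apply/andP; split; lia].
Qed.

Definition loc (al be : nat -> nat -> K) x y :=
  al (entry x i0) (entry x i1) * dl x y + be (entry x i0) (entry x i1) * dl (swp x P.+1) y.

Lemma coef_mul_locl al be g x z : coef_mul (loc al be) g x z =
  al (entry x i0) (entry x i1) * g x z + be (entry x i0) (entry x i1) * g (swp x P.+1) z.
Proof.
rewrite /coef_mul /loc; under eq_bigr do rewrite mulrDl -!mulrA.
by rewrite big_split /= -!mulr_sumr !sum_dl_mul.
Qed.

Lemma loc_diag_comm d al be : (forall y, d (swp y P.+1) = d y) ->
  coef_mul (loc al be) (diag d) =2 coef_mul (diag d) (loc al be).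
Proof. by move=> d_swp x z; rewrite coef_mul_locl coef_mul_diagl /loc /diag d_swp; ring. Qed.

Lemma prod_ent_swp (G : nat -> K) x :
  \prod_(p < n) G (ent (swp x P.+1) p.+1) = \prod_(p < n) G (ent x p.+1).
Proof.
under eq_bigr do rewrite entE; under [RHS]eq_bigr do rewrite entE.
exact: (@prod_swp predT G).
Qed.

Lemma TcE : Tc P.+1 =2 loc (T_id q par) (T_sw par).
Proof.
move=> x y; rewrite /Tc /loc /T_id /T_sw (entE x i0) (entE x i1).
change (sgn m) with (@sg K).
case: ltngtP => [h|h|->]; rewrite ?eqxx ?(ltn_eqF h) ?(gtn_eqF h) //; ring.
Qed.

Lemma ScE : Sc P.+1 =2 loc (S_id q par colr) (T_sw par).
Proof.
move=> x y; rewrite /Sc TcE /loc /S_id (entE x i0) (entE x i1).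
case: eqP => [//|colr_ne]; rewrite /sc (entE x i0) (entE x i1).
have ne : entry x i0 != entry x i1 by apply: contra_not_neq colr_ne => ->.
by change (sgn m) with (@sg K); rewrite /T_sw (negbTE ne); ring.
Qed.

Let setp x u v := repl (repl x P.+1 u) P.+2 v.

Lemma entry_setp x u v t : basis_index u -> basis_index v ->
  entry (setp x u v) t = if t == i0 then u else if t == i1 then v else entry x t.
Proof.
move=> u_ok v_ok; rewrite (entry_repl _ i1) // (entry_repl _ i0) //.
by have [->|] := eqVneq t i1; rewrite ?i0_eq_i1F // i1_eq_i0F.
Qed.

Lemma repl_i0 x u : basis_index u -> repl x P.+1 u = setp x u (entry x i1).
Proof.
move=> u_ok; apply: entry_inj => t; rewrite entry_setp ?basis_index_entry //.
rewrite (entry_repl _ i0) //; have [->|] := eqVneq t i1; first by rewrite i1_eq_i0F.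
by case: (t == i0).
Qed.

Lemma repl_i1 x v : basis_index v -> repl x P.+2 v = setp x (entry x i0) v.
Proof.
move=> v_ok; apply: entry_inj => t; rewrite entry_setp ?basis_index_entry //.
by rewrite (entry_repl _ i1) //; have [->|] := eqVneq t i0; rewrite ?i0_eq_i1F.
Qed.

Lemma swp_setp x u v : basis_index u -> basis_index v -> swp (setp x u v) P.+1 = setp x v u.
Proof.
move=> u_ok v_ok; apply: entry_inj => t; rewrite entry_swp !entry_setp //.
case: tpermP => [->|->|/eqP t0 /eqP t1]; last by rewrite (negbTE t0) (negbTE t1).
all: by rewrite !eqxx ?i1_eq_i0F.
Qed.

Lemma swp_eq_setp x : swp x P.+1 = setp x (entry x i1) (entry x i0).
Proof.
apply: entry_inj => t; rewrite entry_swp entry_setp ?basis_index_entry //.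
case: tpermP => [->|->|/eqP t0 /eqP t1]; last by rewrite (negbTE t0) (negbTE t1).
all: by rewrite !eqxx ?i1_eq_i0F.
Qed.

Lemma repl_i0_setp x u v c : basis_index u -> basis_index v -> basis_index c ->
  repl (setp x u v) P.+1 c = setp x c v.
Proof.
move=> u_ok v_ok c_ok; apply: entry_inj => t.
by rewrite (entry_repl _ i0) // !entry_setp //; case: (t == i0).
Qed.

Lemma repl_i1_setp x u v c : basis_index u -> basis_index v -> basis_index c ->
  repl (setp x u v) P.+2 c = setp x u c.
Proof.
move=> u_ok v_ok c_ok; apply: entry_inj => t.
rewrite (entry_repl _ i1) // !entry_setp //.
by have [->|] := eqVneq t i1; rewrite // i1_eq_i0F.
Qed.

Lemma swp_repl x (p : 'I_n) v : basis_index v -> p != i0 -> p != i1 ->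
  swp (repl x p.+1 v) P.+1 = repl (swp x P.+1) p.+1 v.
Proof.
move=> v_ok p0 p1; apply: entry_inj => t; rewrite entry_swp !entry_repl // entry_swp.
move: p0 p1; rewrite ![p == _]eq_sym => p0 p1.
by rewrite -{1}(tpermD p0 p1) (inj_eq perm_inj).
Qed.

Section SiteOperator.
Variables (src tgt : nat) (lam rho : nat -> K) (c0 : K).

Let outer_coef x :=
  c0 * \prod_(r < n | (r < i0)%N) lam (entry x r) * \prod_(r < n | (i1 < r)%N) rho (entry x r).

Lemma site_coef_i0 x : site_coef lam rho c0 x i0 = outer_coef x * rho (entry x i1).
Proof. by rewrite /site_coef (prod_gt_pred (fun r => rho (entry x r))) mulrA. Qed.

Lemma site_coef_i1 x : site_coef lam rho c0 x i1 = outer_coef x * lam (entry x i0).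
Proof.
by rewrite /site_coef (prod_lt_succ (fun r => lam (entry x r))) mulrA -!mulrA [lam _ * _]mulrC.
Qed.

Lemma outer_coef_swp x : outer_coef (swp x P.+1) = outer_coef x.
Proof.
rewrite /outer_coef (@prod_swp (fun r => (r < i0)%N)).
  by rewrite (@prod_swp (fun r => (i1 < r)%N)) // => t; rewrite gt_tperm //= gtn_eqF.
by move=> t; rewrite lt_tperm //= ltn_eqF.
Qed.

Lemma site_coef_swp x p : p != i0 -> p != i1 ->
  site_coef lam rho c0 (swp x P.+1) p = site_coef lam rho c0 x p.
Proof.
rewrite -!val_eqE /= => p0 p1.
rewrite /site_coef (@prod_swp (fun r => (r < p)%N)); last by move=> t; apply: lt_tperm.
by rewrite (@prod_swp (fun r => (p < r)%N)) // => t; apply: gt_tperm.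
Qed.

Lemma site_op_loc_comm al be : basis_index src -> basis_index tgt ->
  op2_comm (op2_site src tgt lam rho) (op2_local al be) ->
  coef_mul (site_op src tgt lam rho c0) (loc al be) =2
  coef_mul (loc al be) (site_op src tgt lam rho c0).
Proof.
move=> src_ok tgt_ok two_site x z.
rewrite coef_mul_site_opl coef_mul_locl /site_op !mulr_sumr -big_split /=.
apply: (sum_eq_off2 i0_neq_i1) => [p p0 p1|].
  have [p0' p1'] : i0 != p /\ i1 != p by rewrite ![_ == p]eq_sym.
  rewrite /loc !entry_repl_ne // entry_swp tpermD // site_coef_swp // swp_repl //.
  ring.
rewrite !site_coef_i0 !site_coef_i1 !outer_coef_swp !entry_swp tpermL tpermR.
rewrite (repl_i0 x tgt_ok) (repl_i1 x tgt_ok) swp_eq_setp.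
rewrite !repl_i0_setp ?basis_index_entry // !repl_i1_setp ?basis_index_entry // /loc.
rewrite !entry_setp ?basis_index_entry // !eqxx ?i0_eq_i1F ?i1_eq_i0F /=.
rewrite !swp_setp ?basis_index_entry //.
have := two_site (entry x i0) (entry x i1) (fun u v => dl (setp x u v) z).
rewrite /op2_site /op2_local /=.
set L := (X in X = _ -> _); set R := (X in _ = X -> _) => two_site_x.
apply/eqP; rewrite -subr_eq0; apply/eqP.
transitivity (outer_coef x * (L - R)); first by rewrite /L /R; ring.
by rewrite two_site_x subrr mulr0.
Qed.

End SiteOperator.

End AdjacentPositions.

Lemma qv_neq0 : q != 0.
Proof.
rewrite /qv tofrac_eq0; apply/eqP => /(congr1 (mcoeff U_(@ord0 m))).
by rewrite mcoeffXU eqxx mcoeff0 => /eqP; rewrite oner_eq0.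
Qed.

Lemma two_neq0 : (2%:R : K) != 0.
Proof.
rewrite -(rmorph_nat (GRing.RMorphism.clone _ _ (@tofrac _) _)) /= tofrac_eq0.
rewrite -mpolyC_nat mpolyC_eq0.
by change ((2%:R : (Rdefinitions.R)[i]) != 0); rewrite Num.Theory.pnatr_eq0.
Qed.

Local Notation boundaries := [seq dd k l c | c <- iota 1 m.-1].

Lemma colr_succ b : b \notin boundaries -> colr b.+1 = colr b.
Proof.
rewrite /Defs.colr => b_inner; congr S; apply: eq_big_nat => c /andP[c1 cm].
congr nat_of_bool; rewrite ltnS leq_eqVlt; case: eqP => // c_b.
case/negP: b_inner; apply/mapP; exists c => //; rewrite mem_iota; lia.
Qed.

Lemma colr_repl_first y (p : 'I_n) v : basis_index v -> colr v = colr (entry y p) ->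
  colr (ent (repl y p.+1 v) 1) = colr (ent y 1).
Proof.
move=> v_ok colr_v; pose t0 : 'I_n := Ordinal (leq_ltn_trans (leq0n p) (ltn_ord p)).
rewrite !(entE _ t0) entry_repl //.
by have [-> | //] := eqVneq t0 p.
Qed.

Local Notation commutes_with_Psi := (commutes_with (PsiGen m n k l)).

Lemma loc_commutes_with_Psi P (ltP : (P.+1 < n)%N) al be :
  (forall b, (0 < b < N)%N -> b \notin boundaries ->
     op2_comm (op2_E q par b) (op2_local al be) /\
     op2_comm (op2_F q par b) (op2_local al be)) ->
  commutes_with_Psi (mat (loc ltP al be)).
Proof.
move=> two_site Y [[b [b1 bN [->|->]]] | [b [b1 bN b_inner [->|->]]]].
- apply: mat_comm.
  change (Kc b) with (diag (fun x => \prod_(p < n) kb m k l b (ent x p.+1))).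
  by apply: loc_diag_comm => y /=; apply: (prod_ent_swp ltP (kb m k l b)).
- apply: mat_comm.
  change (Kic b) with (diag (fun x => \prod_(p < n) (kb m k l b (ent x p.+1))^-1)).
  by apply: loc_diag_comm => y /=; apply: (prod_ent_swp ltP (fun v => (kb m k l b v)^-1)).
- have [E_comm _] := two_site b (introT andP (conj b1 bN)) b_inner.
  rewrite (eq_mat (EcE b)); apply: mat_comm => x z; symmetry.
  by apply: (site_op_loc_comm ltP _ _ _ E_comm); rewrite /basis_index ?b1 ?bN ?(ltnW bN).
- have [_ F_comm] := two_site b (introT andP (conj b1 bN)) b_inner.
  rewrite (eq_mat (FcE b)); apply: mat_comm => x z; symmetry.
  by apply: (site_op_loc_comm ltP _ _ _ F_comm); rewrite /basis_index ?b1 ?bN ?(ltnW bN).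
Qed.

Lemma S0_commutes_with_Psi : commutes_with_Psi (mat (@S0c m n k l)).
Proof.
change (@S0c m n k l) with (diag (fun x => Qv m (colr (ent x 1)))).
move=> Y [[b [b1 bN [->|->]]] | [b [b1 bN b_inner [->|->]]]].
- exact/mat_comm/diag_comm.
- exact/mat_comm/diag_comm.
- rewrite (eq_mat (EcE b)); apply: mat_comm => x z; symmetry.
  apply: site_op_diag_comm => y p y_p; congr (Qv m _).
  by apply: colr_repl_first; rewrite ?y_p ?colr_succ // /basis_index b1 ltnW.
- rewrite (eq_mat (FcE b)); apply: mat_comm => x z; symmetry.
  apply: site_op_diag_comm => y p y_p; congr (Qv m _).
  by apply: colr_repl_first; rewrite ?y_p ?colr_succ.
Qed.

Lemma Tmat_commutes_with_Psi a : (0 < a < n)%N -> commutes_with_Psi (Tmat m n k l a).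
Proof.
case: a => [//|P] /= ltP; rewrite /Tmat (eq_mat (TcE ltP)).
apply: loc_commutes_with_Psi => b _ _.
by split; [exact: (op2_comm_E_T par qv_neq0 two_neq0) |
  exact: (op2_comm_F_T par qv_neq0 two_neq0)].
Qed.

Lemma Smat_commutes_with_Psi a : (0 < a < n)%N -> commutes_with_Psi (mat (@Sc m n k l a)).
Proof.
case: a => [//|P] /= ltP; rewrite (eq_mat (ScE ltP)).
apply: loc_commutes_with_Psi => b _ /colr_succ colr_b.
by split; [exact: (op2_comm_E_S par qv_neq0 two_neq0 colr_b) |
  exact: (op2_comm_F_S par qv_neq0 two_neq0 colr_b)].
Qed.

Lemma T0mat_commutes_with_Psi : commutes_with_Psi (T0mat m n k l).
Proof.
rewrite /T0mat.
apply: (@commutes_with_foldr _ _ _ (fun a => invmx (Tmat m n k l a))) => [a|].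
  by rewrite mem_iota => a_range; apply/commutes_withV/Tmat_commutes_with_Psi; lia.
apply: commutes_withM S0_commutes_with_Psi.
rewrite /theta; apply: (@commutes_with_foldr _ _ _ (fun a => mat (@Sc m n k l a))) => [a|].
  by rewrite mem_rev mem_iota => a_range; apply: Smat_commutes_with_Psi; lia.
exact: commutes_with1.
Qed.

End TensorPower.

Unset Implicit Arguments.

Theorem mainTheorem4 (m n : nat) (k l : nat -> nat) :
  (1 <= m)%N -> (1 <= n)%N -> (0 < NN m k l)%N ->
  forall X Y : 'M[Kf m]_#|Tn m n k l|,
    gen_alg (PhiGen m n k l) X ->
    gen_alg (PsiGen m n k l) Y ->
    X *m Y = Y *m X.
Proof.
move=> _ _ _ X Y; apply: gen_alg_comm => X' Y' [->|[a [a_gt0 a_lt ->]]] PsiY.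
  exact: T0mat_commutes_with_Psi.
by apply: Tmat_commutes_with_Psi => //; lia.
Qed.
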